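(* Let $p$ be a prime and $G=Z_{p^{\lambda_1}}\times\cdots\times Z_{p^{\lambda_n}}$ with $\lambda_1\le\cdots\le\lambda_n$. Every type of $G$ is automorphic to a unique canonical type. Moreover, every canonical type is the maximum type in its automorphism class: if $\mathbf a$ is canonical, then $\mathbf a$ is the maximum element (for the componentwise order) of $\{\mathbf b\in\Lambda(G): T(\mathbf b)\subseteq O(\mathbf a)\}$.
   Context: Set $\lambda_0=0$. Tuples of integers are ordered componentwise: $\mathbf a\le\mathbf b$ iff $a_i\le b_i$ for all $i$. $\Lambda(G)=\{\mathbf a\in\mathbb Z^n:\mathbf 0\le\mathbf a\le(\lambda_1,\dots,\lambda_n)\}$. For $\mathbf a\in\Lambda(G)$, the type $T(\mathbf a)$ is the set of $(g_1,\dots,g_n)\in G$ with $|g_i|=p^{a_i}$ for all $i$; the types partition $G$. Two elements are automorphic if some automorphism of $G$ maps one to the other; each type lies in a single $\mathrm{Aut}(G)$-orbit, and two types are called automorphic if they lie in the same orbit. $O(\mathbf a)$ denotes the $\mathrm{Aut}(G)$-orbit (automorphism class) containing $T(\mathbf a)$. A tuple $\mathbf a\in\Lambda(G)$ (and the type $T(\mathbf a)$) is canonical if (I) $a_i\ge a_{i-1}$ for all $i\in\{2,\dots,n\}$ and (II) $a_{i+1}-a_i\le\lambda_{i+1}-\lambda_i$ for all $i\in\{1,\dots,n-1\}$. *)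

From mathcomp Require Import all_boot.
Unset Printing Implicit Defensive.

(* Coordinates are 0-indexed: i : 'I_n stands for the paper's index i+1.
   G = Z_{p^lam 0} x ... x Z_{p^lam (n-1)}, an element is a dependent
   finite function g with g i : 'I_(p ^ lam i) (residues mod p^lam i). *)
Definition Gty (p n : nat) (lam : 'I_n -> nat) :=
  {dffun forall i : 'I_n, 'I_(p ^ lam i)}.

Definition has_order (m x k : nat) : Prop :=
  0 < k /\ m %| k * x /\ (forall k', 0 < k' -> m %| k' * x -> k <= k').

Definition inT (p n : nat) (lam : 'I_n -> nat) (a : 'I_n -> nat)
  (g : Gty p n lam) : Prop :=
  forall i : 'I_n, has_order (p ^ lam i) (g i) (p ^ a i).

Definition is_sum (p n : nat) (lam : 'I_n -> nat) (g h k : Gty p n lam) : Prop :=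
  forall i : 'I_n, val (k i) = (val (g i) + val (h i)) %% p ^ lam i.

Definition is_aut (p n : nat) (lam : 'I_n -> nat) (f : Gty p n lam -> Gty p n lam) : Prop :=
  bijective f /\
  forall g h k : Gty p n lam, is_sum p n lam g h k -> is_sum p n lam (f g) (f h) (f k).

Definition inLambda (n : nat) (lam a : 'I_n -> nat) : Prop :=
  forall i : 'I_n, a i <= lam i.

(* canonical tuples; condition (II) a_{i+1}-a_i <= lam_{i+1}-lam_i is written
   additively (equivalent over the integers) *)
Definition canonical (n : nat) (lam a : 'I_n -> nat) : Prop :=
  inLambda n lam a /\
  (forall i j : 'I_n, val j = (val i).+1 -> a i <= a j) /\
  (forall i j : 'I_n, val j = (val i).+1 -> a j + lam i <= lam j + a i).

Definition in_autclass (p n : nat) (lam : 'I_n -> nat) (a : 'I_n -> nat)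
  (g : Gty p n lam) : Prop :=
  exists f, is_aut p n lam f /\ exists h, inT p n lam a h /\ f h = g.

Definition automorphic (p n : nat) (lam a b : 'I_n -> nat) : Prop :=
  exists f : Gty p n lam -> Gty p n lam, is_aut p n lam f /\
  exists g, inT p n lam a g /\ inT p n lam b (f g).

From mathcomp Require Import all_boot zify.

(* The properties "p^k g is divisible by p^h in G" are invariant under Aut(G), and
   for g of type a such a property holds iff every coordinate i has a_i <= k or
   h <= lam_i - a_i + k.  A canonical type a is the largest type satisfying all the
   properties that a satisfies; this gives uniqueness and maximality.
   For existence, the transvection x_t += p^(lam_t - lam_s) x_s is an automorphism
   which, at an adjacent pair violating canonicity, raises a_t to a_s - (lam_s - lam_t);
   the defect \sum_i (lam_i - a_i) decreases until the type is canonical. *)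

Set Implicit Arguments.
Unset Strict Implicit.

Lemma modnMmr_dvdn d m c u : d %| c * m -> c * (u %% m) = c * u %[mod d].
Proof.
case/dvdnP=> q def_cm; rewrite {2}(divn_eq u m) mulnDr mulnCA def_cm.
by rewrite mulnA modnMDl.
Qed.

Section PrimePowerOrder.
Variable p : nat.
Hypothesis p_pr : prime p.

Let p_gt1 : 1 < p. Proof. exact: prime_gt1. Qed.

Lemma pexpn_gt0 e : 0 < p ^ e.
Proof. by rewrite expn_gt0 prime_gt0. Qed.

Definition ord_exp (L u e : nat) : Prop := forall e', (p ^ L %| p ^ e' * u) = (e <= e').

Lemma has_orderP L u e : has_order (p ^ L) u (p ^ e) <-> ord_exp L u e.
Proof.
split=> [[_ [dvd_e min_e]] e' | ord_u].
  apply/idP/idP => [dvd_e'|le_ee'].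
    by rewrite -(leq_exp2l _ _ p_gt1); apply: min_e; rewrite ?pexpn_gt0.
  by rewrite -(subnKC le_ee') expnD -mulnA mulnCA dvdn_mull.
split; first exact: pexpn_gt0.
split=> [|k k_gt0 dvd_k]; first by rewrite ord_u.
have dvd_gcd : p ^ L %| gcdn k (p ^ e) * u.
  by rewrite muln_gcdl dvdn_gcd dvd_k ord_u leqnn.
case/(dvdn_pfactor _ _ p_pr): (dvdn_gcdr k (p ^ e)) => e0 le_e0e def_e0.
have -> : e = e0 by apply/eqP; rewrite eqn_leq le_e0e andbT -ord_u -def_e0.
by apply: dvdn_leq => //; rewrite -def_e0 dvdn_gcdl.
Qed.

Lemma ord_exp_leq L u e : ord_exp L u e -> e <= L.
Proof. by move=> ord_u; rewrite -ord_u dvdn_mulr. Qed.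

Lemma ord_exp_modn L u e : ord_exp L (u %% p ^ L) e <-> ord_exp L u e.
Proof.
have eq_dvd e' : (p ^ L %| p ^ e' * (u %% p ^ L)) = (p ^ L %| p ^ e' * u).
  by rewrite /dvdn modnMmr.
by split=> ord_u e'; rewrite -ord_u eq_dvd.
Qed.

Lemma ord_exp_pow L e : e <= L -> ord_exp L (p ^ (L - e)) e.
Proof. by move=> le_eL e'; rewrite -expnD dvdn_Pexp2l //; lia. Qed.

Lemma ord_exp_add L u v a b :
  ord_exp L u a -> ord_exp L v b -> a < b -> ord_exp L (u + v) b.
Proof.
move=> ord_u ord_v lt_ab.
have dvd_sum e' : a <= e' -> (p ^ L %| p ^ e' * (u + v)) = (b <= e').
  by move=> le_ae'; rewrite mulnDr dvdn_addr ?ord_u // ord_v.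
move=> e'; have [/dvd_sum//|lt_e'a] := leqP a e'.
apply/idP/idP => [dvd_e'|]; last by lia.
suff : p ^ L %| p ^ a * (u + v) by rewrite dvd_sum // leqNgt lt_ab.
by rewrite -(subnK (ltnW lt_e'a)) expnD -mulnA dvdn_mull.
Qed.

(* [x |-> p ^ (Lt - Ls) * x] is the natural homomorphism [Z_(p ^ Ls) -> Z_(p ^ Lt)];
   both subtractions are truncated. *)
Lemma ord_exp_scale Ls Lt u e :
  ord_exp Ls u e -> ord_exp Lt (p ^ (Lt - Ls) * u) (e - (Ls - Lt)).
Proof.
move=> ord_u e'; rewrite -(dvdn_pmul2r (pexpn_gt0 (Ls - Lt))) -expnD.
have -> : Lt + (Ls - Lt) = Ls + (Lt - Ls) by lia.
have -> : p ^ e' * (p ^ (Lt - Ls) * u) * p ^ (Ls - Lt) =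
          p ^ (e' + (Ls - Lt)) * u * p ^ (Lt - Ls) by rewrite expnD; lia.
by rewrite expnD (dvdn_pmul2r (pexpn_gt0 _)) ord_u; lia.
Qed.

Lemma ord_exp_dvdn L u e : ord_exp L u e -> p ^ (L - e) %| u.
Proof.
move=> ord_u; have := ord_u e; rewrite leqnn -{1}(subnKC (ord_exp_leq ord_u)).
by rewrite expnD dvdn_pmul2l ?pexpn_gt0.
Qed.

(* Either [p ^ k * u] vanishes, or it has [p]-adic valuation [L - e + k]. *)
Lemma ord_exp_pmul_dvd L u e k h : ord_exp L u e ->
  (exists y, p ^ k * u = p ^ h * y %[mod p ^ L]) <-> (e <= k \/ h <= L - e + k).
Proof.
move=> ord_u; have le_eL := ord_exp_leq ord_u.
split=> [[y eq_uy]|].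
  have [|lt_ke] := leqP e k; [by left | right]; rewrite leqNgt; apply/negP => lt_h.
  suff : p ^ L %| p ^ (e - 1) * u by rewrite ord_u; lia.
  have -> : p ^ (e - 1) * u = p ^ (e - 1 - k) * (p ^ k * u).
    by rewrite mulnA -expnD; congr (p ^ _ * _); lia.
  rewrite /dvdn -modnMmr eq_uy modnMmr mulnA -expnD -/(dvdn _ _) dvdn_mulr //.
  by rewrite dvdn_Pexp2l //; lia.
have [le_ek _|lt_ke [//|le_h]] := leqP e k.
  by exists 0; rewrite muln0 mod0n; apply/eqP; rewrite -/(dvdn _ _) ord_u.
case/dvdnP: (ord_exp_dvdn ord_u) => z ->; exists (p ^ (L - e + k - h) * z).
suff -> : p ^ k * (z * p ^ (L - e)) = p ^ h * (p ^ (L - e + k - h) * z) by [].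
rewrite mulnCA -expnD mulnA -expnD mulnC.
by congr (p ^ _ * _); lia.
Qed.

End PrimePowerOrder.

Section CanonicalTuples.
Variables (n : nat) (lam : 'I_n -> nat).

(* For [g] of type [a]: [p ^ k * g] is divisible by [p ^ h] in [G] ([pmul_dvd_type]). *)
Definition type_pmul_dvd (a : 'I_n -> nat) (k h : nat) : Prop :=
  forall i, a i <= k \/ h <= lam i - a i + k.

Lemma canonical_mono a : canonical n lam a ->
  forall i j : 'I_n, i <= j -> a i <= a j /\ a j + lam i <= lam j + a i.
Proof.
case=> _ [mono_a mono_la].
suff chain d (i j : 'I_n) : val j = val i + d -> a i <= a j /\ a j + lam i <= lam j + a i.
  by move=> i j le_ij; apply: (chain (j - i)); rewrite subnKC.
elim: d i j => [|d IHd] i j def_j.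
  have -> : j = i by apply: val_inj; rewrite def_j addn0.
  by lia.
have lt_id : val i + d < n by have := ltn_ord j; rewrite def_j; lia.
have := IHd i (Ordinal lt_id) erefl.
have := mono_a (Ordinal lt_id) j; have := mono_la (Ordinal lt_id) j.
by rewrite /= def_j addnS => /(_ erefl) + /(_ erefl); lia.
Qed.

(* The witness [k = a j], [h = a j + (lam j - b j) + 1] separates [b] from [a]
   as soon as [a j < b j]. *)
Lemma canonical_max a b : canonical n lam a -> inLambda n lam b ->
  (forall k h, type_pmul_dvd a k h -> type_pmul_dvd b k h) -> forall j, b j <= a j.
Proof.
move=> can_a b_le_lam dvd_ab j; rewrite leqNgt; apply/negP => lt_ab.
have [a_le_lam _] := can_a; have := a_le_lam j; have := b_le_lam j => bj_le aj_le.
suff /dvd_ab /(_ j) : type_pmul_dvd a (a j) (a j + (lam j - b j) + 1) by lia.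
move=> i; have [|lt_ji] := leqP (a i) (a j); [by left | right].
have [le_ji|lt_ij] := leqP (val j) (val i).
  by have := (canonical_mono can_a le_ji).2; have := a_le_lam i; lia.
by have := (canonical_mono can_a (ltnW lt_ij)).1; lia.
Qed.

Lemma canonical_or_raisable a : (forall i j : 'I_n, i <= j -> lam i <= lam j) ->
  inLambda n lam a ->
  canonical n lam a \/ exists s t : 'I_n, s != t /\ a t < a s - (lam s - lam t).
Proof.
move=> mono_lam a_le_lam.
pose viol i j := (a j < a i) || (lam j + a i < a j + lam i).
have [/existsP[i /existsP[j /andP[/eqP def_j viol_ij]]]|can_a] :=
  boolP [exists i : 'I_n, exists j : 'I_n, (val j == (val i).+1) && viol i j].
  right; have le_lam : lam i <= lam j by apply: mono_lam; rewrite def_j.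
  have neq_ij : i != j by apply/eqP => eq_ij; move: def_j; rewrite eq_ij; lia.
  by case/orP: viol_ij => ?; [exists i, j | exists j, i; rewrite eq_sym]; split=> //; lia.
left; split=> //; split=> i j def_j.
all: move/existsPn/(_ i)/existsPn/(_ j): can_a; rewrite def_j eqxx /viol /=; lia.
Qed.

End CanonicalTuples.

Section Group.
Variables (p n : nat) (lam : 'I_n -> nat).
Hypothesis p_pr : prime p.
Local Notation G := (Gty p n lam).

Definition mkG (F : 'I_n -> nat) : G :=
  [ffun i => Ordinal (ltn_pmod (F i) (pexpn_gt0 p_pr (lam i)))].

Lemma mkGE F i : val (mkG F i) = F i %% p ^ lam i.
Proof. by rewrite ffunE. Qed.

Lemma eq_Gty (g h : G) : (forall i, val (g i) = val (h i)) -> g = h.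
Proof. by move=> eq_gh; apply/ffunP => i; apply: val_inj. Qed.

Lemma is_sum_uniq (g h k k' : G) :
  is_sum p n lam g h k -> is_sum p n lam g h k' -> k = k'.
Proof. by move=> sum_k sum_k'; apply: eq_Gty => i; rewrite sum_k sum_k'. Qed.

Lemma is_aut_id : is_aut p n lam id.
Proof. by split=> //; exists id. Qed.

Lemma is_aut_comp f f' :
  is_aut p n lam f -> is_aut p n lam f' -> is_aut p n lam (f \o f').
Proof.
case=> bij_f add_f [bij_f' add_f'].
by split=> [|g h k /add_f'/add_f //]; exact: bij_comp.
Qed.

Definition scaleG (c : nat) (g : G) : G := mkG (fun i => c * g i).

Lemma scale1G g : scaleG 1 g = g.
Proof. by apply: eq_Gty => i; rewrite mkGE mul1n modn_small. Qed.

Lemma is_sum_scaleGS c g : is_sum p n lam (scaleG c g) g (scaleG c.+1 g).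
Proof. by move=> i; rewrite !mkGE modnDml mulSn addnC. Qed.

Lemma aut_scaleG f c g : is_aut p n lam f -> 0 < c -> f (scaleG c g) = scaleG c (f g).
Proof.
case=> _ add_f; case: c => // c _; elim: c => [|c IHc]; first by rewrite !scale1G.
have := add_f _ _ _ (is_sum_scaleGS c.+1 g); rewrite IHc => sum_f.
exact: is_sum_uniq sum_f (is_sum_scaleGS _ _).
Qed.

Definition pmul_dvd (k h : nat) (g : G) : Prop :=
  exists y, scaleG (p ^ k) g = scaleG (p ^ h) y.

Lemma pmul_dvd_aut f k h g : is_aut p n lam f -> pmul_dvd k h (f g) <-> pmul_dvd k h g.
Proof.
move=> aut_f; have [[f' fK f'K] _] := aut_f.
have scale_f c x : 0 < c -> f (scaleG c x) = scaleG c (f x) by exact: aut_scaleG.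
split=> [[y eq_y] | [y eq_y]]; last by exists (f y); rewrite -!scale_f ?pexpn_gt0 ?eq_y.
exists (f' y); apply: (can_inj fK).
by rewrite !scale_f ?pexpn_gt0 // f'K.
Qed.

Lemma pmul_dvd_type a g k h : inT p n lam a g ->
  pmul_dvd k h g <-> type_pmul_dvd lam a k h.
Proof.
move=> type_g; have ord_g i : ord_exp p (lam i) (g i) (a i) by exact/has_orderP.
split=> [[y eq_y] i | dvd_a].
  apply/(ord_exp_pmul_dvd p_pr k h (ord_g i)); exists (y i).
  by have := congr1 (fun z : G => val (z i)) eq_y; rewrite /= !mkGE.
have dvd_i i : exists y, p ^ k * g i == p ^ h * y %[mod p ^ lam i].
  by have /(ord_exp_pmul_dvd p_pr k h (ord_g i))[y /eqP] := dvd_a i; exists y.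
exists (mkG (fun i => xchoose (dvd_i i))); apply: eq_Gty => i.
by rewrite !mkGE [RHS]modnMmr; apply/eqP/(xchooseP (dvd_i i)).
Qed.

Lemma automorphic_type_pmul_dvd a b k h : automorphic p n lam a b ->
  type_pmul_dvd lam a k h <-> type_pmul_dvd lam b k h.
Proof.
case=> f [aut_f [g [type_g type_fg]]].
by rewrite -(pmul_dvd_type _ _ type_g) -(pmul_dvd_type _ _ type_fg) pmul_dvd_aut.
Qed.

Lemma inT_exists a : inLambda n lam a -> exists g : G, inT p n lam a g.
Proof.
move=> a_le_lam; exists (mkG (fun i => p ^ (lam i - a i))) => i.
by apply/has_orderP; rewrite // mkGE; apply/ord_exp_modn/ord_exp_pow.
Qed.

(* The transvection [x_t += c * p ^ (lam t - lam s) * x_s]; the factor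
   [p ^ (lam t - lam s)] makes [x_s mod p ^ lam s] a well-defined input. *)
Definition transvection (s t : 'I_n) (c : nat) (x : G) : G :=
  mkG (fun i => x i + (i == t) * (c * p ^ (lam t - lam s) * x s)).

Lemma transvection_ne s t c x i : i != t -> val (transvection s t c x i) = x i.
Proof. by move=> /negbTE neq_it; rewrite mkGE neq_it mul0n addn0 modn_small. Qed.

Lemma transvection_t s t c x :
  val (transvection s t c x t) = (x t + c * p ^ (lam t - lam s) * x s) %% p ^ lam t.
Proof. by rewrite mkGE eqxx mul1n. Qed.

Lemma transvection_sum s t c (g h k : G) : s != t ->
  is_sum p n lam g h k ->
  is_sum p n lam (transvection s t c g) (transvection s t c h) (transvection s t c k).
Proof.
move=> neq_st sum_k i.
have [->|neq_it] := eqVneq i t; last by rewrite !transvection_ne // sum_k.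
have dvd_lam : p ^ lam t %| c * p ^ (lam t - lam s) * p ^ lam s.
  by rewrite -mulnA -expnD dvdn_mull // dvdn_Pexp2l ?prime_gt1 //; lia.
rewrite !transvection_t sum_k (sum_k s) modnDml [RHS]modnDm.
rewrite -[LHS]modnDmr modnMmr_dvdn // modnDmr.
by congr (_ %% _) => /=; lia.
Qed.

Lemma transvection_cancel s t c c' : s != t -> c + c' = p ^ lam t ->
  cancel (transvection s t c) (transvection s t c').
Proof.
move=> neq_st def_cc' x; apply: eq_Gty => i.
have [->|neq_it] := eqVneq i t; last by rewrite !transvection_ne.
rewrite !transvection_t transvection_ne // modnDml -addnA -!mulnDl def_cc'.
by rewrite -mulnA mulnC addnC modnMDl modn_small.
Qed.

Lemma transvection_aut s t : s != t -> is_aut p n lam (transvection s t 1).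
Proof.
move=> neq_st; split; last by move=> g h k; exact: transvection_sum.
have def_c : 1 + (p ^ lam t - 1) = p ^ lam t by rewrite subnKC ?pexpn_gt0.
exists (transvection s t (p ^ lam t - 1)); first exact: transvection_cancel.
by apply: transvection_cancel; rewrite // addnC.
Qed.

Lemma transvection_type s t a (x : G) : s != t -> inT p n lam a x ->
  a t < a s - (lam s - lam t) ->
  inT p n lam [eta a with t |-> a s - (lam s - lam t)] (transvection s t 1 x).
Proof.
move=> neq_st type_x lt_ts i /=; have [->|neq_it] := eqVneq i t; last first.
  by move: (type_x i); rewrite /inT transvection_ne.
have ord_x j : ord_exp p (lam j) (x j) (a j) by exact/(has_orderP p_pr).
apply/(has_orderP p_pr); rewrite transvection_t mul1n; apply/ord_exp_modn.
exact: (ord_exp_add p_pr (ord_x t) (ord_exp_scale p_pr (lam t) (ord_x s)) lt_ts).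
Qed.

(* Each transvection raising a coordinate strictly decreases [\sum_i (lam i - a i)]. *)
Lemma canonical_image (a : 'I_n -> nat) (g : G) :
  (forall i j : 'I_n, i <= j -> lam i <= lam j) ->
  inLambda n lam a -> inT p n lam a g ->
  exists c f, canonical n lam c /\ is_aut p n lam f /\ inT p n lam c (f g).
Proof.
move=> mono_lam; have [N] := ubnP (\sum_i (lam i - a i)).
elim: N a g => // N IHN a g lt_sum a_le_lam type_g.
have [can_a|[s [t [neq_st lt_ts]]]] := canonical_or_raisable mono_lam a_le_lam.
  by exists a, id; do 2!split=> //; exact: is_aut_id.
set a' := [eta a with t |-> a s - (lam s - lam t)].
have a'_le_lam : inLambda n lam a'.
  by move=> i /=; case: eqP => [->|_]; [have := a_le_lam s; lia | exact: a_le_lam].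
have lt_sum' : \sum_i (lam i - a' i) < \sum_i (lam i - a i).
  rewrite (bigD1 t) // [ltnRHS](bigD1 t) //= eqxx.
  rewrite (eq_bigr (fun i => lam i - a i)) => [|i /negbTE-> //].
  by rewrite ltn_add2r; have := a_le_lam s; have := a_le_lam t; lia.
have [c [f [can_c [aut_f type_fg]]]] := IHN a' _ (leq_trans lt_sum' lt_sum) a'_le_lam
  (transvection_type neq_st type_g lt_ts).
exists c, (f \o transvection s t 1); do 2!split=> //.
exact/is_aut_comp/transvection_aut.
Qed.

End Group.

Unset Implicit Arguments.

Theorem mainTheorem2 (p n : nat) (lam : 'I_n -> nat)
  (hp : prime p)
  (hlam : forall i j : 'I_n, i <= j -> lam i <= lam j) :
  (forall a : 'I_n -> nat, inLambda n lam a ->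
     (exists c : 'I_n -> nat, canonical n lam c /\ automorphic p n lam a c) /\
     (forall c1 c2 : 'I_n -> nat,
        canonical n lam c1 -> automorphic p n lam a c1 ->
        canonical n lam c2 -> automorphic p n lam a c2 ->
        forall i, c1 i = c2 i)) /\
  (forall a : 'I_n -> nat, canonical n lam a ->
     (forall g : Gty p n lam, inT p n lam a g -> in_autclass p n lam a g) /\
     (forall b : 'I_n -> nat, inLambda n lam b ->
        (forall g : Gty p n lam, inT p n lam b g -> in_autclass p n lam a g) ->
        forall i, b i <= a i)).
Proof.
split=> [a a_le_lam | a can_a]; first split.
- have [g type_g] := inT_exists hp a_le_lam.
  have [c [f [can_c [aut_f type_fg]]]] := canonical_image hp hlam a_le_lam type_g.
  by exists c; split=> //; exists f; split=> //; exists g.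
- move=> c1 c2 can_c1 aut_c1 can_c2 aut_c2 i.
  have dvd_c1c2 k h : type_pmul_dvd lam c1 k h <-> type_pmul_dvd lam c2 k h.
    by rewrite -(automorphic_type_pmul_dvd hp k h aut_c1)
               (automorphic_type_pmul_dvd hp k h aut_c2).
  have [[c1_le_lam _] [c2_le_lam _]] := (can_c1, can_c2).
  apply/eqP; rewrite eqn_leq (canonical_max can_c2 c1_le_lam) => [|k h /dvd_c1c2 //].
  by rewrite (canonical_max can_c1 c2_le_lam) => // k h /dvd_c1c2.
split=> [g type_g | b b_le_lam class_b].
  by exists id; split; [exact: is_aut_id | exists g].
have [g type_g] := inT_exists hp b_le_lam.
have [f [aut_f [h [type_h def_g]]]] := class_b g type_g.
have aut_ab : automorphic p n lam a b by exists f; split=> //; exists h; rewrite def_g.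
apply: canonical_max can_a b_le_lam _ => k h'.
by move/(automorphic_type_pmul_dvd hp k h' aut_ab).
Qed.
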